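(* Let $G$ be a structured single-touch computation DAG executed by parsimonious work stealing on $P$ processors, choosing the future thread first at every fork. Let $t$ be the future thread at a fork $v$, let $u$ be the right child of $v$, and let $x$ be the (unique) touch of $t$. If $x$ or $u$ is a deviation, then either $u$ is stolen (taken from a deque by a steal) or some touch by $t$ (a touch node lying in thread $t$) is a deviation.
   Context: Computation model. A future-parallel computation is a finite DAG whose nodes are tasks. Every node has in-degree and out-degree in $\{1,2\}$, except a distinguished root node (in-degree $0$) and a distinguished final node (out-degree $0$). Edges are of three types: continuation edges, future edges and touch edges. A thread is a maximal chain of nodes connected by continuation edges. The main thread begins at the root and ends at the final node. Every other thread $t$ begins at a node with an incoming future edge from a node $v$ of another thread $t'$; then $v$ is the fork of $t$, $t'$ is the parent thread of $t$, and $t$ is the future thread at $v$. A fork $v$ has two children: the first node of $t$ (the left child) and the continuation successor of $v$ in $t'$ (the right child); both have in-degree $1$ and are not touches. The last node of every non-main thread has exactly one outgoing edge, which is a touch edge into another thread. If there is a touch edge from a node $v_1$ of thread $t_1$ to a node $v_2$ of thread $t_2\neq t_1$, and a continuation edge from $u_2$ to $v_2$, then $v_2$ is a touch of $t_1$ (a touch by $t_2$, i.e. it lies in $t_2$), $v_1$ is its future parent, $u_2$ its local parent, $t_1$ its future thread, and the fork of $t_1$ is its corresponding fork. A node $w$ is a descendant of a node $u$ if there is a directed path from $u$ to $w$. A DAG is a structured future-parallel computation if for the future thread $t$ of any fork $v$: (1) the local parents of the touches of $t$ are descendants of $v$, and (2) at least one touch of $t$ is a descendant of the right child of $v$. It is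 a structured single-touch computation if, in addition, each future thread $t$ spawned at a fork $v$ has exactly one touch, and this touch is a descendant of the right child of $v$. Scheduler. In parsimonious work stealing with $P$ processors, each processor has a deque. A node is ready when all its parents have been executed. After executing a node of out-degree 1, a processor continues with its child if that child is ready. After executing a fork, it pushes one child onto the bottom of its deque and executes the other; ''future thread first'' means it executes the left child and pushes the right child. When a processor has no node to execute, it pops the bottom node of its own deque if nonempty, and otherwise steals the top node of the deque of some other processor. The sequential execution is the execution with $P=1$ (same fork policy). Deviation. A node $v_2$ is a deviation in a parallel execution if, letting $v_1$ be the node executed immediately before $v_2$ in the sequential execution, the processor that executes $v_2$ in the parallel execution did not execute $v_1$ immediately before $v_2$. *)

From HB Require Import structures.
From mathcomp Require Import all_boot.
Set Implicit Arguments. Unset Strict Implicit. Unset Printing Implicit Defensive.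

Record fpdag (V : finType) := FPDag {
  cont : rel V; fut : rel V; tch : rel V; root : V; final : V }.

Section DAG.
Variables (V : finType) (G : fpdag V).

Definition edge : rel V := fun u w => [|| cont G u w, fut G u w | tch G u w].
Definition indeg (w : V) := #|[pred u | edge u w]|.
Definition outdeg (u : V) := #|[pred w | edge u w]|.
Definition descendant (u w : V) := connect edge u w.
(* u and w lie on the same maximal continuation chain (thread) *)
Definition same_thread (u w : V) := connect (cont G) u w || connect (cont G) w u.
Definition has_cont_pred (w : V) := [exists u, cont G u w].
Definition has_cont_succ (u : V) := [exists w, cont G u w].
Definition is_fork (v : V) := [exists l, fut G v l].
Definition is_touch (x : V) :=
  [exists v1, [exists u2, [&& tch G v1 x, ~~ same_thread v1 x & cont G u2 x]]].
Definition touch_of (l x : V) :=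
  [exists v1, [exists u2,
    [&& same_thread l v1, tch G v1 x, ~~ same_thread v1 x & cont G u2 x]]].

Definition future_parallel : Prop :=
      (forall u w, edge u w -> ~~ connect edge w u) /\
      (forall u w, cont G u w + fut G u w + tch G u w <= 1) /\
      (indeg (root G) = 0 /\ forall w, w != root G -> indeg w \in [:: 1; 2]) /\
      (outdeg (final G) = 0 /\ forall u, u != final G -> outdeg u \in [:: 1; 2]) /\
      (forall u, #|[pred w | cont G u w]| <= 1 /\ #|[pred w | cont G w u]| <= 1) /\
      (same_thread (root G) (final G) /\ ~~ has_cont_succ (final G)) /\
      (forall w, w != root G -> ~~ has_cont_pred w -> exists v, fut G v w) /\
      (* forks: left child (future edge) and right child (continuation),
         both of in-degree 1 and not touches *)
      (forall v l, fut G v l ->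
         indeg l = 1 /\ ~~ is_touch l /\
         exists r, [/\ cont G v r, indeg r = 1 & ~~ is_touch r]) /\
      ((forall u, ~~ has_cont_succ u -> ~~ same_thread (root G) u ->
          outdeg u = 1 /\ exists w, tch G u w && ~~ same_thread u w) /\
       (forall v1 v2, tch G v1 v2 ->
          [&& ~~ has_cont_succ v1, ~~ same_thread v1 v2 & has_cont_pred v2])).

(* Structured single-touch computation. For a fork v with left child l
   (first node of the future thread t) and right child r. *)
Definition structured_single_touch : Prop :=
  forall v l r, fut G v l -> cont G v r ->
  [/\
      (forall x u2, touch_of l x -> cont G u2 x -> descendant v u2),
      (exists x, touch_of l x && descendant r x) &
      (forall x y, touch_of l x -> touch_of l y -> x = y)].

End DAG.

Record state (V : finType) (P : nat) := St {
  asg : 'I_P -> option V;        (* node the processor is about to execute *)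
  dq : 'I_P -> seq V;            (* deque: head = top, last = bottom *)
  log : seq ('I_P * V);          (* executed nodes, in execution order *)
  stolen : seq V }.

Definition executed (V : finType) (P : nat) (s : state V P) : seq V :=
  [seq z.2 | z <- log s].

Definition upd (P : nat) (T : Type) (f : 'I_P -> T) (p : 'I_P) (x : T) :=
  fun q => if q == p then x else f q.

Section Sched.
Variables (V : finType) (G : fpdag V) (P : nat).

Definition ready (ex : seq V) (w : V) := [forall u, edge G u w ==> (u \in ex)].

Inductive step : state V P -> state V P -> Prop :=
| ExecFork s p v l r :
    asg s p = Some v -> ready (executed s) v -> fut G v l -> cont G v r ->
    step s (St (upd (asg s) p (Some l)) (upd (dq s) p (rcons (dq s p) r))
               (rcons (log s) (p, v)) (stolen s))
| ExecNext s p v c :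
    asg s p = Some v -> ready (executed s) v -> ~~ is_fork G v -> edge G v c ->
    ready (rcons (executed s) v) c ->
    step s (St (upd (asg s) p (Some c)) (dq s) (rcons (log s) (p, v)) (stolen s))
| ExecStop s p v :
    asg s p = Some v -> ready (executed s) v -> ~~ is_fork G v ->
    (forall c, edge G v c -> ~~ ready (rcons (executed s) v) c) ->
    step s (St (upd (asg s) p None) (dq s) (rcons (log s) (p, v)) (stolen s))
| Pop s p d w :
    asg s p = None -> dq s p = rcons d w ->
    step s (St (upd (asg s) p (Some w)) (upd (dq s) p d) (log s) (stolen s))
| Steal s p q w d :
    asg s p = None -> dq s p = [::] -> q != p -> dq s q = w :: d ->
    step s (St (upd (asg s) p (Some w)) (upd (dq s) q d) (log s)
               (rcons (stolen s) w)).

Inductive steps : state V P -> state V P -> Prop :=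
| steps_refl s : steps s s
| steps_cons s s' s'' : step s s' -> steps s' s'' -> steps s s''.

Definition init (p0 : 'I_P) : state V P :=
  St (fun q => if q == p0 then Some (root G) else None) (fun _ => [::]) [::] [::].

Definition complete_run (s : state V P) : Prop :=
  exists p0, steps (init p0) s /\ forall w, w \in executed s.

End Sched.

Definition imm_before (V : eqType) (o : seq V) (v1 v2 : V) :=
  exists a b, o = a ++ v1 :: v2 :: b.

Definition deviation (V : finType) (P : nat) (o : seq V) (s : state V P) (v2 : V) :=
  exists v1, imm_before o v1 v2 /\
  exists a b (p : 'I_P), log s = a ++ (p, v2) :: b /\
    forall c, [seq z.2 | z <- a & z.1 == p] <> rcons c v1.

(* Let [v] be a fork with left child [l], right child [u], let [w] be the
   last node of the future thread [t] and [x] its unique touch. The key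
   fact (right_child_follows_last) is that, in any complete run where [u]
   is never stolen and no touch of [t] is stalled (its future parent runs
   before its local parent), the processor executing [u] executed [w]
   immediately before. Applied to the sequential run, by strong induction on the
   execution order, it shows that no touch is ever stalled sequentially,
   so the sequential predecessor of [u] is [w] and that of any touch is its
   local parent. In the parallel run, if [u] is not stolen and no touch of
   [t] deviates, touches of [t] are not stalled, so [u] again follows [w]
   and [x] again follows its local parent: neither is a deviation. *)

From Pilot Require Import Defs.
From HB Require Import structures.
From mathcomp Require Import all_boot zify.
From Stdlib Require Import Classical.

Set Implicit Arguments. Unset Strict Implicit. Unset Printing Implicit Defensive.

Section Paths.
Variables (T : finType) (e : rel T).

Lemma connect_first a c : connect e a c -> a != c ->
  exists2 d, e a d & connect e d c.
Proof.
move=> /connectP [p Hp ->]; case: p Hp => [|d p] /= Hp; first by rewrite eqxx.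
by case/andP: Hp => Had Hp _; exists d => //; apply/connectP; exists p.
Qed.

Lemma connect_last a c : connect e a c -> a != c ->
  exists2 d, connect e a d & e d c.
Proof.
move=> /connectP [p Hp ->]; case/lastP: p Hp => [|p d] /=; first by rewrite eqxx.
rewrite rcons_path last_rcons => /andP [Hp Hd] _; exists (last a p) => //.
by apply/connectP; exists p.
Qed.

Lemma connect_chain a b c : (forall x y z, e x y -> e x z -> y = z) ->
  connect e a b -> connect e a c -> connect e b c || connect e c b.
Proof.
move=> e_fun /connectP [p Hp ->]; elim: p a Hp => [|d p IH] a /=.
  by move=> _ ->.
case/andP=> Had Hp Hac.
have [<-|Hne] := eqVneq a c.
  by apply/orP; right; apply/connectP; exists (d :: p) => //=; rewrite Had.
have [d' Had' Hd'c] := connect_first Hac Hne.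
by rewrite (e_fun _ _ _ Had' Had) in Hd'c; exact: IH.
Qed.

Lemma connect_ind_last (Q : T -> Prop) a :
  Q a -> (forall x y, Q x -> e x y -> Q y) -> forall b, connect e a b -> Q b.
Proof.
move=> Qa Hs b /connectP [p Hp ->]; elim/last_ind: p Hp => [|p d IH] //=.
by rewrite rcons_path last_rcons => /andP [Hp Hd]; apply: (Hs (last a p)) => //; exact: IH.
Qed.

End Paths.

Lemma card_le1_eq (T : finType) (A : {pred T}) a b :
  #|A| <= 1 -> a \in A -> b \in A -> a = b.
Proof. by move=> /card_le1_eqP H Ha Hb; apply: H. Qed.

Lemma card_le2_cases (T : finType) (A : {pred T}) a b c :
  #|A| <= 2 -> a \in A -> b \in A -> c \in A -> a != b -> c = a \/ c = b.
Proof.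
move=> HA Ha Hb Hc Hab.
have [->|Hca] := eqVneq c a; first by left.
have [->|Hcb] := eqVneq c b; first by right.
have Hu : uniq [:: a; b; c] by rewrite /= !inE negb_or Hab eq_sym Hca eq_sym Hcb.
have Hs : {subset [:: a; b; c] <= enum A}.
  by move=> z; rewrite !inE mem_enum => /or3P [] /eqP ->.
by have := leq_trans (uniq_leq_size Hu Hs); rewrite -cardE => /(_ _ HA).
Qed.

Lemma count_mem_rcons (T : eqType) (s : seq T) a z :
  count_mem z (rcons s a) = count_mem z s + (a == z).
Proof. by rewrite -cats1 count_cat /= addn0. Qed.

Lemma index_rcons_mem (T : eqType) (s : seq T) a z :
  z \in s -> index z (rcons s a) = index z s.
Proof. by move=> Hz; rewrite -cats1 index_cat Hz. Qed.

Lemma index_rcons_notin (T : eqType) (s : seq T) a :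
  a \notin s -> index a (rcons s a) = size s.
Proof. by move=> Ha; rewrite -cats1 index_cat (negbTE Ha) /= eqxx addn0. Qed.

Lemma rcons_split (T : Type) (L a b : seq T) z y :
  rcons L z = a ++ y :: b ->
  (a = L /\ y = z) \/ (exists b', L = a ++ y :: b').
Proof.
case/lastP: b => [|b' w].
  by rewrite cats1 => /rcons_inj [-> ->]; left.
by rewrite -rcons_cons -rcons_cat => /rcons_inj [-> _]; right; exists b'.
Qed.

Lemma index_lt_prefix (T : eqType) (s1 s2 : seq T) n z :
  index z (s1 ++ n :: s2) < index n (s1 ++ n :: s2) -> z \in s1.
Proof.
rewrite !index_cat; case: (boolP (z \in s1)) => // _.
case: (boolP (n \in s1)) => Hn; first by have := index_mem n s1; rewrite Hn; lia.
by rewrite /= eqxx; lia.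
Qed.

Lemma imm_pred_unique (T : eqType) (L A B A' B' : seq T) v1 e y :
  uniq L -> L = A ++ v1 :: y :: B -> L = A' ++ e :: y :: B' -> v1 = e.
Proof.
move=> Hu E1 E2.
have Hs A0 B0 v0 : L = A0 ++ v0 :: y :: B0 -> index y L = (size A0).+1.
  move=> E; move: Hu; rewrite E -cat_rcons cat_uniq => /and3P [_ H _].
  have Hy : y \notin rcons A0 v0 by move: H; apply: contra => Hy; rewrite /= Hy.
  by rewrite index_cat (negbTE Hy) /= eqxx addn0 size_rcons.
have Es : size A = size A' by have := Hs _ _ _ E1; rewrite (Hs _ _ _ E2) => -[].
have := congr1 (fun L => nth v1 L (size A)) E1; rewrite nth_cat ltnn subnn /=.
by rewrite E2 Es nth_cat ltnn subnn.
Qed.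

Section Sums.
Variable P : nat.

Lemma sum_upd1 (F F' : 'I_P -> nat) p : (forall q, q != p -> F' q = F q) ->
  \sum_(q < P) F' q + F p = \sum_(q < P) F q + F' p.
Proof.
move=> H; rewrite (bigD1 p) // [in RHS](bigD1 p) //=.
by rewrite (eq_bigr F) => [|q Hq]; [lia | exact: H].
Qed.

Lemma sum_ge1 (F : 'I_P -> nat) p : F p <= \sum_(q < P) F q.
Proof. by rewrite (bigD1 p) //= leq_addr. Qed.

Lemma sum_ge2 (F : 'I_P -> nat) p q : p != q -> F p + F q <= \sum_(r < P) F r.
Proof.
move=> Hpq; rewrite (bigD1 p) //= leq_add2l (bigD1 q) /=; last by rewrite eq_sym.
exact: leq_addr.
Qed.

End Sums.

(** * Local structure of a future-parallel DAG *)

Section Graph.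
Variables (V : finType) (G : fpdag V).
Hypothesis Hfp : future_parallel G.

Local Notation edge := (edge G).

Lemma fp_acyclic a b : edge a b -> connect edge b a -> False.
Proof. by case: Hfp => H _ /H /negP. Qed.

Lemma cont_edge a b : cont G a b -> edge a b.
Proof. by rewrite /Defs.edge => ->. Qed.
Lemma fut_edge a b : fut G a b -> edge a b.
Proof. by rewrite /Defs.edge => ->; rewrite orbT. Qed.
Lemma tch_edge a b : tch G a b -> edge a b.
Proof. by rewrite /Defs.edge => ->; rewrite !orbT. Qed.

Lemma connect_cont_edge a b : connect (cont G) a b -> connect edge a b.
Proof. by apply: connect_sub => x y /cont_edge; exact: connect1. Qed.

Lemma edge_types a b : cont G a b + fut G a b + tch G a b <= 1.
Proof. by case: Hfp => _ [H _]. Qed.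

Lemma cont_fut a b : cont G a b -> fut G a b -> False.
Proof. by move=> H1 H2; have := edge_types a b; rewrite H1 H2. Qed.
Lemma cont_tch a b : cont G a b -> tch G a b -> False.
Proof. by move=> H1 H2; have := edge_types a b; rewrite H1 H2 addnC. Qed.

Lemma cont_func a b c : cont G a b -> cont G a c -> b = c.
Proof.
case: Hfp => _ [_ [_ [_ [H _]]]] Hb Hc; case: (H a) => H1 _.
by apply: (card_le1_eq H1); rewrite inE.
Qed.

Lemma cont_inj a b c : cont G a c -> cont G b c -> a = b.
Proof.
case: Hfp => _ [_ [_ [_ [H _]]]] Hb Hc; case: (H c) => _ H1.
by apply: (card_le1_eq H1); rewrite inE.
Qed.

Lemma root_no_parent a : edge a (Defs.root G) -> False.
Proof.
case: Hfp => _ [_ [[H _] _]] Ha.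
have : 0 < indeg G (Defs.root G) by apply/card_gt0P; exists a.
by rewrite H.
Qed.

Lemma final_no_child a : edge (final G) a -> False.
Proof.
case: Hfp => _ [_ [_ [[H _] _]]] Ha.
have : 0 < outdeg G (final G) by apply/card_gt0P; exists a.
by rewrite H.
Qed.

Lemma indeg_le2 w : indeg G w <= 2.
Proof.
case: Hfp => _ [_ [[H0 H] _]]; have [->|Hw] := eqVneq w (Defs.root G); first by rewrite H0.
by have := H _ Hw; rewrite !inE => /orP [] /eqP ->.
Qed.

Lemma outdeg_le2 w : outdeg G w <= 2.
Proof.
case: Hfp => _ [_ [_ [[H0 H] _]]]; have [->|Hw] := eqVneq w (final G); first by rewrite H0.
by have := H _ Hw; rewrite !inE => /orP [] /eqP ->.
Qed.

Lemma tch_props a b : tch G a b ->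
  [&& ~~ has_cont_succ G a, ~~ same_thread G a b & has_cont_pred G b].
Proof. by case: Hfp => _ [_ [_ [_ [_ [_ [_ [_ [_ H]]]]]]]] /H. Qed.

Lemma fork_props v l : fut G v l ->
  indeg G l = 1 /\ ~~ is_touch G l /\
  exists r, [/\ cont G v r, indeg G r = 1 & ~~ is_touch G r].
Proof. by case: Hfp => _ [_ [_ [_ [_ [_ [_ [H _]]]]]]] /H. Qed.

Lemma thread_start w : w != Defs.root G -> ~~ has_cont_pred G w -> exists v, fut G v w.
Proof. by case: Hfp => _ [_ [_ [_ [_ [_ [H _]]]]]] /H. Qed.

Lemma indeg1_eq w a b : indeg G w = 1 -> edge a w -> edge b w -> a = b.
Proof.
move=> H Ha Hb; apply: (card_le1_eq (A := [pred u | edge u w])); rewrite ?inE //.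
by rewrite -/(indeg G w) H.
Qed.

Lemma touch_parents f g y e : tch G f y -> cont G g y -> edge e y -> e = f \/ e = g.
Proof.
move=> Hf Hg He.
have Hfg : f != g by apply/eqP => Efg; subst; exact: (cont_tch Hg Hf).
apply: (card_le2_cases (A := [pred u | edge u y])) (indeg_le2 y) _ _ _ Hfg.
all: by rewrite inE ?(tch_edge Hf) ?(cont_edge Hg).
Qed.

Lemma is_touchP y : is_touch G y <-> exists f g, tch G f y /\ cont G g y.
Proof.
split; first by case/existsP=> f /existsP [g /and3P [H1 _ H3]]; exists f, g.
case=> f [g [H1 H2]]; apply/existsP; exists f; apply/existsP; exists g.
by case/and3P: (tch_props H1) => _ -> _; rewrite H1 H2.
Qed.

Lemma is_forkP v : is_fork G v <-> exists l, fut G v l.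
Proof. by split; [case/existsP => l; exists l | case=> l H; apply/existsP; exists l]. Qed.

Lemma fork_left_unique v l l' : fut G v l -> fut G v l' -> l = l'.
Proof.
move=> Hl Hl'; have [_ [_ [r [Hr _ _]]]] := fork_props Hl.
have Hlr : l != r by apply/eqP => E; subst; exact: (cont_fut Hr Hl).
have := card_le2_cases (A := [pred w | edge v w]) (a := l) (b := r) (c := l') (outdeg_le2 v).
rewrite !inE (fut_edge Hl) (fut_edge Hl') (cont_edge Hr) => /(_ isT isT isT Hlr) [] // E.
by subst; case: (cont_fut Hr Hl').
Qed.

Lemma right_parent v l r e : fut G v l -> cont G v r -> edge e r -> e = v.
Proof.
move=> Hl Hr He; have [_ [_ [r' [Hr' Hi _]]]] := fork_props Hl.
rewrite -(cont_func Hr Hr') in Hi.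
exact: (indeg1_eq Hi He (cont_edge Hr)).
Qed.

Lemma left_parent v l e : fut G v l -> edge e l -> e = v.
Proof. by move=> Hl He; have [Hi _] := fork_props Hl; exact: (indeg1_eq Hi He (fut_edge Hl)). Qed.

Lemma left_no_cont_pred v l : fut G v l -> ~~ has_cont_pred G l.
Proof.
move=> Hl; apply/existsP => -[a Ha].
by have E := left_parent Hl (cont_edge Ha); subst; exact: (cont_fut Ha Hl).
Qed.

Lemma right_not_touch v l r : fut G v l -> cont G v r -> ~~ is_touch G r.
Proof.
move=> Hl Hr; have [_ [_ [r' [Hr' _ H]]]] := fork_props Hl.
by rewrite (cont_func Hr Hr').
Qed.

Lemma cont_child_parents n c e : cont G n c -> edge e c -> e = n \/ tch G e c.
Proof.
move=> Hc; rewrite /Defs.edge => /or3P [He|He|He].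
- by left; exact: (cont_inj He Hc).
- by left; rewrite (left_parent He (cont_edge Hc)).
- by right.
Qed.

Lemma nonfork_child n c c' : ~~ is_fork G n -> cont G n c -> edge n c' -> c' = c.
Proof.
move=> Hnf Hc; rewrite /Defs.edge => /or3P [H|H|H].
- exact: (cont_func H Hc).
- by case/negP: Hnf; apply/is_forkP; exists c'.
- by case/and3P: (tch_props H) => /negP []; apply/existsP; exists c.
Qed.

Lemma last_node_child n c' : ~~ is_fork G n -> ~~ has_cont_succ G n -> edge n c' -> tch G n c'.
Proof.
move=> Hnf Hs; rewrite /Defs.edge => /or3P [H|H|H] //.
- by case/negP: Hs; apply/existsP; exists c'.
- by case/negP: Hnf; apply/is_forkP; exists c'.
Qed.

Lemma cont_chain a b c : connect (cont G) a b -> connect (cont G) a c ->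
  connect (cont G) b c || connect (cont G) c b.
Proof. by apply: connect_chain; exact: cont_func. Qed.

Lemma thread_reaches_last a b n : connect (cont G) a b -> connect (cont G) a n ->
  ~~ has_cont_succ G n -> connect (cont G) b n.
Proof.
move=> Hb Hn Hns; case/orP: (cont_chain Hb Hn) => // H.
have [<-//|Hne] := eqVneq n b.
by have [d Hd _] := connect_first H Hne; case/negP: Hns; apply/existsP; exists d.
Qed.

Lemma thread_last_unique a n w : connect (cont G) a n -> connect (cont G) a w ->
  ~~ has_cont_succ G n -> ~~ has_cont_succ G w -> n = w.
Proof.
move=> Hn Hw Hsn Hsw; apply/eqP; apply: contraT => Hne.
case/orP: (cont_chain Hn Hw) => H.
- by have [d Hd _] := connect_first H Hne; case/negP: Hsn; apply/existsP; exists d.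
- rewrite eq_sym in Hne; have [d Hd _] := connect_first H Hne.
  by case/negP: Hsw; apply/existsP; exists d.
Qed.

Lemma same_thread_start a b : ~~ has_cont_pred G a ->
  same_thread G a b -> connect (cont G) a b.
Proof.
move=> Ha /orP [] // H; have [<-//|Hne] := eqVneq b a.
by have [d _ Hd] := connect_last H Hne; case/negP: Ha; apply/existsP; exists d.
Qed.

Lemma root_no_cont_pred : ~~ has_cont_pred G (Defs.root G).
Proof. by apply/existsP => -[a /cont_edge /root_no_parent]. Qed.

Lemma main_last f : connect (cont G) (Defs.root G) f -> ~~ has_cont_succ G f -> f = final G.
Proof.
case: Hfp => _ [_ [_ [_ [_ [[Hm Hs] _]]]]] Hf Hfs.
by apply: (thread_last_unique Hf) => //; exact: same_thread_start root_no_cont_pred Hm.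
Qed.

(* By induction on the number of continuation
   ancestors, which decreases strictly along a continuation edge. *)
Lemma thread_start_exists n : exists2 st, connect (cont G) st n & ~~ has_cont_pred G st.
Proof.
move: {2}#|_| (leqnn #|[pred y | connect (cont G) y n]|) => k.
elim: k n => [|k IH] n Hk.
  by move: Hk; rewrite leqn0 => /eqP/card0_eq/(_ n); rewrite inE connect0.
case: (boolP (has_cont_pred G n)) => [/existsP [m Hm]|Hn]; last by exists n.
have Hlt : #|[pred y | connect (cont G) y m]| < #|[pred y | connect (cont G) y n]|.
  apply/proper_card/properP; split.
    by apply/subsetP => y; rewrite !inE => Hy; exact: connect_trans Hy (connect1 Hm).
  exists n; rewrite !inE ?connect0 //; apply/negP => Hnm.
  exact: fp_acyclic (cont_edge Hm) (connect_cont_edge Hnm).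
have [st H1 H2] := IH m (leq_trans Hlt Hk).
by exists st => //; exact: connect_trans H1 (connect1 Hm).
Qed.

Lemma touch_source_fork f y : tch G f y ->
  exists st v2 u2, [/\ connect (cont G) st f, fut G v2 st & cont G v2 u2].
Proof.
move=> Hfy; have [st Hst Hnp] := thread_start_exists f.
case/and3P: (tch_props Hfy) => Hfs _ _.
have [Er|Hnr] := eqVneq st (Defs.root G).
  subst st; have Ef := main_last Hst Hfs; subst f.
  by case: (final_no_child (tch_edge Hfy)).
have [v2 Hv2] := thread_start Hnr Hnp.
have [_ [_ [u2 [Hu2 _ _]]]] := fork_props Hv2.
by exists st, v2, u2.
Qed.

End Graph.

(** * An invariant of work-stealing executions *)

Section Invariant.
Variables (V : finType) (G : fpdag V) (P : nat).
Hypothesis Hfp : future_parallel G.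

Local Notation edge := (edge G).
Local Notation root := (Defs.root G).
Local Notation state := (state V P).

Definition hist (L : seq ('I_P * V)) (p : 'I_P) := [seq z.2 | z <- L & z.1 == p].

Definition held (s : state) q z := (asg s q == Some z) + count_mem z (dq s q).

Definition copies (s : state) z := count_mem z (executed s) + \sum_(q < P) held s q z.

Definition right_child (z : V) := exists f, cont G f z /\ is_fork G f.

Definition enabled_by (L : seq ('I_P * V)) p c :=
  let ex := [seq z.2 | z <- L] in
  exists cc e, [/\ hist L p = rcons cc e, edge e c &
    forall e', edge e' c -> e' \in ex /\ index e' ex <= index e ex].

Definition provenance L p c := [\/ c = root, right_child c | enabled_by L p c].

Record inv (s : state) : Prop := Inv {
  inv_copies : forall z, copies s z <= 1;
  inv_pool_parents : forall p z a,
    asg s p = Some z \/ z \in dq s p -> edge a z -> a \in executed s;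
  inv_topological : forall a b, edge a b -> b \in executed s ->
    index a (executed s) < index b (executed s);
  inv_dq_right : forall p z, z \in dq s p -> right_child z;
  inv_asg_prov : forall p c, asg s p = Some c -> provenance (log s) p c;
  inv_log_prov : forall a b p y, log s = a ++ (p, y) :: b -> provenance a p y }.

Section Consequences.
Variable s : state.
Hypothesis Hs : inv s.

Lemma held_le1 p z : count_mem z (executed s) + held s p z <= 1.
Proof. by have := inv_copies Hs z; have := sum_ge1 (held s ^~ z) p; rewrite /copies; lia. Qed.

Lemma held_le2 p q z : p != q -> held s p z + held s q z <= 1.
Proof.
by move=> Hpq; have := inv_copies Hs z; have := sum_ge2 (held s ^~ z) Hpq; rewrite /copies; lia.
Qed.

Lemma held_asg p z : asg s p = Some z -> 0 < held s p z.
Proof. by move=> H; rewrite /held H eqxx. Qed.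

Lemma held_dq p z : z \in dq s p -> 0 < held s p z.
Proof. by rewrite -has_pred1 has_count /held; lia. Qed.

Lemma asg_not_executed p z : asg s p = Some z -> z \notin executed s.
Proof.
move=> Ha; rewrite -has_pred1 has_count -leqNgt.
by have := held_le1 p z; have := held_asg Ha; lia.
Qed.

Lemma dq_not_executed p z : z \in dq s p -> z \notin executed s.
Proof.
move=> Hd; rewrite -has_pred1 has_count -leqNgt.
by have := held_le1 p z; have := held_dq Hd; lia.
Qed.

Lemma asg_unique p q z : asg s p = Some z -> asg s q = Some z -> p = q.
Proof.
move=> Hp Hq; apply/eqP; apply: contraT => Hpq.
by have := held_le2 z Hpq; have := held_asg Hp; have := held_asg Hq; lia.
Qed.

Lemma asg_not_dq p q z : asg s p = Some z -> z \in dq s q -> False.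
Proof.
move=> Hp Hq; have [E|Hpq] := eqVneq p q.
  subst; have := held_le1 q z; rewrite /held Hp eqxx.
  by move: Hq; rewrite -has_pred1 has_count; lia.
by have := held_le2 z Hpq; have := held_asg Hp; have := held_dq Hq; lia.
Qed.

Lemma executed_uniq : uniq (executed s).
Proof.
apply: count_mem_uniq => z; have := inv_copies Hs z; rewrite /copies.
case: (boolP (z \in executed s)) => Hz; last by rewrite (count_memPn Hz).
by move: Hz; rewrite -has_pred1 has_count; lia.
Qed.

Lemma executed_closed a b : edge a b -> b \in executed s -> a \in executed s.
Proof.
move=> Hab Hb; have := inv_topological Hs Hab Hb; rewrite -index_mem in Hb.
by rewrite -index_mem => H; exact: ltn_trans H Hb.
Qed.

Lemma executed_closed_connect a b : connect edge a b -> b \in executed s -> a \in executed s.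
Proof.
move: b; apply: (connect_ind_last (Q := fun b => b \in executed s -> a \in executed s)) => //.
by move=> y b IH Hyb Hb; exact: IH (executed_closed Hyb Hb).
Qed.

Lemma executed_order a b : connect edge a b -> b \in executed s ->
  index a (executed s) <= index b (executed s).
Proof.
move: b; apply: (connect_ind_last
  (Q := fun b => b \in executed s -> index a (executed s) <= index b (executed s))) => //.
move=> y b IH Hyb Hb; have H1 := inv_topological Hs Hyb Hb.
by have := IH (executed_closed Hyb Hb); lia.
Qed.

End Consequences.

Lemma Some_eqE (T : eqType) (a b : T) : (Some a == Some b) = (a == b).
Proof. by apply/eqP/eqP => [[]|->]. Qed.

Lemma upd_eq (T : Type) (f : 'I_P -> T) p x : upd f p x p = x.
Proof. by rewrite /upd eqxx. Qed.
Lemma upd_neq (T : Type) (f : 'I_P -> T) p x q : q != p -> upd f p x q = f q.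
Proof. by rewrite /upd => /negbTE ->. Qed.

Lemma executed_rcons (s : state) a d st p v :
  executed (St a d (rcons (log s) (p, v)) st) = rcons (executed s) v.
Proof. by rewrite /executed /= map_rcons. Qed.

Lemma hist_rcons_eq (L : seq ('I_P * V)) p v : hist (rcons L (p, v)) p = rcons (hist L p) v.
Proof. by rewrite /hist filter_rcons /= eqxx map_rcons. Qed.
Lemma hist_rcons_neq (L : seq ('I_P * V)) p q v : q != p -> hist (rcons L (p, v)) q = hist L q.
Proof. by move=> H; rewrite /hist filter_rcons /= eq_sym (negbTE H). Qed.

Lemma copies_local (s s' : state) p z : (forall q, q != p -> held s' q z = held s q z) ->
  copies s' z + held s p z + count_mem z (executed s) =
  copies s z + held s' p z + count_mem z (executed s').
Proof. by move/sum_upd1; rewrite /copies; lia. Qed.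

Lemma enabled_by_rcons L p q v c : q != p ->
  enabled_by L q c -> enabled_by (rcons L (p, v)) q c.
Proof.
move=> Hq [cc [e [Hh He Hall]]]; exists cc, e; rewrite map_rcons hist_rcons_neq //.
split=> // e' He'; have [Hin Hle] := Hall _ He'; have [Hein _] := Hall _ He.
by rewrite mem_rcons inE Hin orbT !index_rcons_mem.
Qed.

Section Exec.
Variables (s : state) (p : 'I_P) (v : V).
Hypotheses (Hs : inv s) (Ha : asg s p = Some v) (Hr : ready G (executed s) v).

Lemma child_fresh c : edge v c -> copies s c = 0.
Proof.
move=> He; have Hv := asg_not_executed Hs Ha.
have Hpar q : asg s q = Some c \/ c \in dq s q -> False.
  by move=> Hq; have := inv_pool_parents Hs Hq He; rewrite (negbTE Hv).
have Hc : c \notin executed s by apply/negP => /(executed_closed Hs He); apply/negP.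
rewrite /copies (count_memPn Hc) add0n; apply: big1 => q _; rewrite /held.
have /count_memPn -> : c \notin dq s q by apply/negP => Hq; apply: (Hpar q); right.
by case: eqP => // Hq; case: (Hpar q); left.
Qed.

Lemma exec_topological (s' : state) : executed s' = rcons (executed s) v ->
  forall a b, edge a b -> b \in executed s' -> index a (executed s') < index b (executed s').
Proof.
move=> -> a b Hab; rewrite mem_rcons inE => /orP [/eqP Eb|Hb].
  subst b; have Ha' : a \in executed s by move/forallP: Hr => /(_ a) /implyP; apply.
  by rewrite index_rcons_mem // index_rcons_notin ?(asg_not_executed Hs Ha) // index_mem.
have Ha' := executed_closed Hs Hab Hb.
by rewrite !index_rcons_mem //; exact: (inv_topological Hs Hab Hb).
Qed.

Lemma exec_log_prov (s' : state) : log s' = rcons (log s) (p, v) ->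
  forall a b q y, log s' = a ++ (q, y) :: b -> provenance a q y.
Proof.
move=> -> a b q y E; case: (rcons_split E) => [[-> [-> ->]]|[b' {}E]].
  exact: (inv_asg_prov Hs Ha).
exact: (inv_log_prov Hs E).
Qed.

Lemma exec_asg_prov_other q c : q != p -> asg s q = Some c ->
  provenance (rcons (log s) (p, v)) q c.
Proof.
move=> Hq /(inv_asg_prov Hs) [->|H|H]; [exact: Or31 | exact: Or32 |].
by apply: Or33; exact: enabled_by_rcons.
Qed.

End Exec.

Lemma exec_enables (s : state) p v c : v \notin executed s -> edge v c ->
  (forall e', edge e' c -> e' \in rcons (executed s) v) ->
  enabled_by (rcons (log s) (p, v)) p c.
Proof.
move=> Hv He Hpar; exists (hist (log s) p), v; rewrite hist_rcons_eq map_rcons.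
split=> // e' He'; have := Hpar _ He'; rewrite -/(executed s) => Hin; split=> //.
by rewrite index_rcons_notin //; move: Hin; rewrite -index_mem size_rcons ltnS.
Qed.

Lemma pool_parents_rcons (s : state) v q z a : inv s ->
  asg s q = Some z \/ z \in dq s q -> edge a z -> a \in rcons (executed s) v.
Proof. by move=> Hs Hz He; rewrite mem_rcons inE (inv_pool_parents Hs Hz He) orbT. Qed.

Lemma inv_fork (s : state) p v l r : inv s -> asg s p = Some v -> ready G (executed s) v ->
  fut G v l -> cont G v r ->
  inv (St (upd (asg s) p (Some l)) (upd (dq s) p (rcons (dq s p) r))
          (rcons (log s) (p, v)) (stolen s)).
Proof.
move=> Hs Ha Hr Hl Hc; set s' := St _ _ _ _.
have Hex : executed s' = rcons (executed s) v by exact: executed_rcons.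
have Hlr : l != r by apply/eqP => E; subst; exact: (cont_fut Hfp Hc Hl).
split.
- move=> z; have : copies s' z = copies s z + (l == z) + (r == z).
    have Hoth q : q != p -> held s' q z = held s q z by move=> Hq; rewrite /held /= !upd_neq.
    have E1 : held s' p z = (l == z) + count_mem z (dq s p) + (r == z).
      by rewrite /held /= !upd_eq count_mem_rcons Some_eqE addnA.
    have E2 : held s p z = (v == z) + count_mem z (dq s p) by rewrite /held Ha Some_eqE.
    by have := copies_local Hoth; rewrite E1 E2 Hex count_mem_rcons; lia.
  have := inv_copies Hs z; have [<-|_] := eqVneq l z.
    by rewrite (child_fresh Hs Ha (fut_edge Hl)) eq_sym (negbTE Hlr); lia.
  by have [<-|_] := eqVneq r z; [rewrite (child_fresh Hs Ha (cont_edge Hc)) | ]; lia.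
- move=> q z a; rewrite Hex /=; have [->|Hq] := eqVneq q p; last first.
    by rewrite !upd_neq //; exact: pool_parents_rcons.
  rewrite !upd_eq mem_rcons inE => -[[<-]|/orP [/eqP ->|Hz]] He.
  + by rewrite (left_parent Hfp Hl He) mem_rcons mem_head.
  + by rewrite (right_parent Hfp Hl Hc He) mem_rcons mem_head.
  + by exact: pool_parents_rcons Hs (or_intror Hz) He.
- exact: (exec_topological Hs Ha Hr Hex).
- move=> q z /=; have [->|Hq] := eqVneq q p; last first.
    by rewrite upd_neq //; exact: (inv_dq_right Hs).
  rewrite upd_eq mem_rcons inE => /orP [/eqP ->|Hz]; last exact: (inv_dq_right Hs Hz).
  by exists v; split=> //; apply/is_forkP; exists l.
- move=> q c /=; have [->|Hq] := eqVneq q p; last first.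
    by rewrite upd_neq //; exact: exec_asg_prov_other.
  rewrite upd_eq => -[<-]; apply/Or33/(exec_enables p (asg_not_executed Hs Ha) (fut_edge Hl)).
  by move=> e' /(left_parent Hfp Hl) ->; rewrite mem_rcons mem_head.
- exact: (exec_log_prov Hs Ha).
Qed.

Lemma inv_next (s : state) p v c : inv s -> asg s p = Some v -> ready G (executed s) v ->
  edge v c -> ready G (rcons (executed s) v) c ->
  inv (St (upd (asg s) p (Some c)) (dq s) (rcons (log s) (p, v)) (stolen s)).
Proof.
move=> Hs Ha Hr He Hrc; set s' := St _ _ _ _.
have Hex : executed s' = rcons (executed s) v by exact: executed_rcons.
have Hpar e' : edge e' c -> e' \in rcons (executed s) v.
  by move/forallP: Hrc => /(_ e') /implyP.
split.
- move=> z; have : copies s' z = copies s z + (c == z).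
    have Hoth q : q != p -> held s' q z = held s q z by move=> Hq; rewrite /held /= !upd_neq.
    have E1 : held s' p z = (c == z) + count_mem z (dq s p).
      by rewrite /held /= !upd_eq Some_eqE.
    have E2 : held s p z = (v == z) + count_mem z (dq s p) by rewrite /held Ha Some_eqE.
    by have := copies_local Hoth; rewrite E1 E2 Hex count_mem_rcons; lia.
  have := inv_copies Hs z; have [<-|_] := eqVneq c z; last by lia.
  by rewrite (child_fresh Hs Ha He); lia.
- move=> q z a; rewrite Hex /=; have [->|Hq] := eqVneq q p; last first.
    by rewrite !upd_neq //; exact: pool_parents_rcons.
  rewrite !upd_eq => -[[<-]|Hz] He'; first exact: Hpar.
  by exact: pool_parents_rcons Hs (or_intror Hz) He'.
- exact: (exec_topological Hs Ha Hr Hex).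
- exact: (inv_dq_right Hs).
- move=> q c' /=; have [->|Hq] := eqVneq q p; last first.
    by rewrite upd_neq //; exact: exec_asg_prov_other.
  by rewrite upd_eq => -[<-]; apply/Or33/(exec_enables p (asg_not_executed Hs Ha) He Hpar).
- exact: (exec_log_prov Hs Ha).
Qed.

Lemma inv_stop (s : state) p v : inv s -> asg s p = Some v -> ready G (executed s) v ->
  inv (St (upd (asg s) p None) (dq s) (rcons (log s) (p, v)) (stolen s)).
Proof.
move=> Hs Ha Hr; set s' := St _ _ _ _.
have Hex : executed s' = rcons (executed s) v by exact: executed_rcons.
split.
- move=> z; have := inv_copies Hs z.
  have Hoth q : q != p -> held s' q z = held s q z by move=> Hq; rewrite /held /= !upd_neq.
  have E1 : held s' p z = count_mem z (dq s p) by rewrite /held /= !upd_eq.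
  have E2 : held s p z = (v == z) + count_mem z (dq s p) by rewrite /held Ha Some_eqE.
  by have := copies_local Hoth; rewrite E1 E2 Hex count_mem_rcons; lia.
- move=> q z a; rewrite Hex /=; have [->|Hq] := eqVneq q p; last first.
    by rewrite !upd_neq //; exact: pool_parents_rcons.
  by rewrite !upd_eq => -[//|Hz] He'; exact: pool_parents_rcons Hs (or_intror Hz) He'.
- exact: (exec_topological Hs Ha Hr Hex).
- exact: (inv_dq_right Hs).
- move=> q c' /=; have [->|Hq] := eqVneq q p; first by rewrite upd_eq.
  by rewrite upd_neq //; exact: exec_asg_prov_other.
- exact: (exec_log_prov Hs Ha).
Qed.

Lemma inv_pop (s : state) p d w : inv s -> asg s p = None -> dq s p = rcons d w ->
  inv (St (upd (asg s) p (Some w)) (upd (dq s) p d) (log s) (stolen s)).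
Proof.
move=> Hs Ha Hd; set s' := St _ _ _ _.
have Hw : w \in dq s p by rewrite Hd mem_rcons mem_head.
have Hsub z : z \in d -> z \in dq s p by move=> Hz; rewrite Hd mem_rcons inE Hz orbT.
split.
- move=> z; have := inv_copies Hs z.
  have Hoth q : q != p -> held s' q z = held s q z by move=> Hq; rewrite /held /= !upd_neq.
  have E1 : held s' p z = (w == z) + count_mem z d by rewrite /held /= !upd_eq Some_eqE.
  have E2 : held s p z = count_mem z d + (w == z) by rewrite /held Ha Hd count_mem_rcons.
  have Hex : executed s' = executed s by [].
  by have := copies_local Hoth; rewrite E1 E2 Hex; lia.
- move=> q z a /=; have [->|Hq] := eqVneq q p; last by rewrite !upd_neq //; exact: (inv_pool_parents Hs).
  rewrite !upd_eq => -[[<-]|/Hsub Hz] He.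
  + exact: (inv_pool_parents Hs (or_intror Hw) He).
  + exact: (inv_pool_parents Hs (or_intror Hz) He).
- exact: (inv_topological Hs).
- move=> q z /=; have [->|Hq] := eqVneq q p; last by rewrite upd_neq //; exact: (inv_dq_right Hs).
  by rewrite upd_eq => /Hsub; exact: (inv_dq_right Hs).
- move=> q c /=; have [->|Hq] := eqVneq q p; last by rewrite upd_neq //; exact: (inv_asg_prov Hs).
  by rewrite upd_eq => -[<-]; apply/Or32; exact: (inv_dq_right Hs Hw).
- exact: (inv_log_prov Hs).
Qed.

Lemma inv_steal (s : state) p q w d : inv s -> asg s p = None -> dq s p = [::] -> q != p ->
  dq s q = w :: d ->
  inv (St (upd (asg s) p (Some w)) (upd (dq s) q d) (log s) (rcons (stolen s) w)).
Proof.
move=> Hs Ha Hdp Hqp Hd; set s' := St _ _ _ _.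
have Hpq : p != q by rewrite eq_sym.
have Hw : w \in dq s q by rewrite Hd mem_head.
have Hsub z : z \in d -> z \in dq s q by move=> Hz; rewrite Hd inE Hz orbT.
split.
- move=> z; have := inv_copies Hs z; rewrite /copies.
  (* [w] moves from the deque of [q] to the assignment of [p]. *)
  pose H r := if r == p then held s' p z else held s r z.
  have S1 : \sum_(r < P) held s' r z + H q = \sum_(r < P) H r + held s' q z.
    apply: sum_upd1 => r Hr; rewrite /H; case: eqP => [->//|/eqP Hrp].
    by rewrite /held /= !upd_neq.
  have S2 : \sum_(r < P) H r + held s p z = \sum_(r < P) held s r z + H p.
    by apply: sum_upd1 => r Hr; rewrite /H (negbTE Hr).
  have E1 : H q = held s q z by rewrite /H (negbTE Hqp).
  have E2 : H p = held s' p z by rewrite /H eqxx.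
  have E3 : held s' p z = (w == z).
    by rewrite /held /= upd_eq upd_neq // Hdp Some_eqE addn0.
  have E4 : held s p z = 0 by rewrite /held Ha Hdp.
  have E5 : held s q z = held s' q z + (w == z).
    by rewrite /held /= upd_neq // upd_eq Hd /=; lia.
  have -> : executed s' = executed s by [].
  by move: S1 S2; rewrite E1 E2 E3 E4 E5; lia.
- move=> r z a /=; have [->|Hr] := eqVneq r p.
    rewrite upd_eq upd_neq // Hdp => -[[<-]|//] He.
    exact: (inv_pool_parents Hs (or_intror Hw) He).
  rewrite upd_neq //; have [->|Hrq] := eqVneq r q; last by rewrite upd_neq //; exact: (inv_pool_parents Hs).
  rewrite upd_eq => -[Hz|/Hsub Hz] He.
  + exact: (inv_pool_parents Hs (or_introl Hz) He).
  + exact: (inv_pool_parents Hs (or_intror Hz) He).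
- exact: (inv_topological Hs).
- move=> r z /=; have [->|Hrq] := eqVneq r q; last by rewrite upd_neq //; exact: (inv_dq_right Hs).
  by rewrite upd_eq => /Hsub; exact: (inv_dq_right Hs).
- move=> r c /=; have [->|Hr] := eqVneq r p; last by rewrite upd_neq //; exact: (inv_asg_prov Hs).
  by rewrite upd_eq => -[<-]; apply/Or32; exact: (inv_dq_right Hs Hw).
- exact: (inv_log_prov Hs).
Qed.

Lemma inv_step (s s' : state) : inv s -> step G s s' -> inv s'.
Proof.
move=> Hs Hst; case: Hst Hs => {s s'}[s p v l r|s p v c|s p v|s p d w|s p q w d].
- by move=> Ha Hr Hl Hc Hs; exact: inv_fork.
- by move=> Ha Hr _ He Hrc Hs; exact: inv_next.
- by move=> Ha Hr _ _ Hs; exact: inv_stop.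
- by move=> Ha Hd Hs; exact: inv_pop.
- by move=> Ha Hd Hq Hdq Hs; exact: inv_steal.
Qed.

Lemma inv_init (p0 : 'I_P) : inv (init G p0).
Proof.
split=> //=.
- move=> z; rewrite /copies /= add0n (bigD1 p0) //= big1 => [|q Hq].
    by rewrite /held /= eqxx addn0; case: eqP.
  by rewrite /held /= (negbTE Hq).
- by move=> p z a [|//]; case: eqP => // _ [<-] /root_no_parent.
- by move=> p c; case: eqP => // _ [<-]; exact: Or31.
- by case.
Qed.

Lemma inv_steps (s s' : state) : inv s -> steps G s s' -> inv s'.
Proof. by move=> Hs H; elim: H Hs => // {}s s1 s2 Hst _ IH Hs; apply/IH/(inv_step Hs). Qed.

End Invariant.

Section Runs.
Variables (V : finType) (G : fpdag V) (P : nat).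
Local Notation state := (state V P).

Lemma step_log (s s' : state) : step G s s' ->
  log s' = log s \/ exists p z, asg s p = Some z /\ log s' = rcons (log s) (p, z).
Proof.
case=> {}s p.
- by move=> v l r Ha _ _ _; right; exists p, v.
- by move=> v c Ha _ _ _ _; right; exists p, v.
- by move=> v Ha _ _ _; right; exists p, v.
- by move=> d w _ _; left.
- by move=> q w d _ _ _ _; left.
Qed.

Lemma steps_log (s s' : state) : steps G s s' -> exists ext, log s' = log s ++ ext.
Proof.
elim=> [s0|s0 s1 s2 Hst _ [ext IH]]; first by exists [::]; rewrite cats0.
case: (step_log Hst) => [E|[p [z [_ E]]]]; first by exists ext; rewrite IH E.
by exists ((p, z) :: ext); rewrite IH E -cats1 -catA.
Qed.

Lemma step_stolen (s s' : state) : step G s s' -> forall z, z \in stolen s -> z \in stolen s'.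
Proof.
case=> {}s p //= q w d _ _ _ _ z Hz.
by rewrite mem_rcons inE Hz orbT.
Qed.

Lemma steps_stolen (s s' : state) :
  steps G s s' -> forall z, z \in stolen s -> z \in stolen s'.
Proof. by elim=> // s0 s1 s2 /step_stolen Hst _ IH z /Hst; exact: IH. Qed.

Lemma steps_trans (s1 s2 s3 : state) : steps G s1 s2 -> steps G s2 s3 -> steps G s1 s3.
Proof. by elim=> // a b c Hab _ IH H; apply: steps_cons Hab (IH H). Qed.

Lemma exec_step_of (s s' : state) v : steps G s s' -> v \in executed s' -> v \notin executed s ->
  exists sa sb, [/\ steps G s sa, step G sa sb, steps G sb s', v \notin executed sa & v \in executed sb].
Proof.
elim=> [s0 -> //|s0 s1 s2 Hst Hs IH Hv Hnv].
case: (boolP (v \in executed s1)) => Hv1.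
  by exists s0, s1; split=> //; exact: steps_refl.
have [sa [sb [H1 H2 H3 H4 H5]]] := IH Hv Hv1.
by exists sa, sb; split=> //; exact: steps_cons Hst H1.
Qed.

Lemma complete_inv (s : state) : future_parallel G -> complete_run G s ->
  [/\ inv G s, exists p, steps G (init G p) s & forall z, z \in executed s].
Proof.
move=> Hfp [p [H Hall]]; split=> //; last by exists p.
exact: (inv_steps Hfp (inv_init Hfp p) H).
Qed.

End Runs.

Lemma sequential_no_steal (V : finType) (G : fpdag V) (s s' : state V 1) :
  steps G s s' -> stolen s = [::] -> stolen s' = [::].
Proof.
elim=> // s0 s1 s2 Hst _ IH H0; apply: IH => //.
case: Hst H0 => //= {}s0 p q w d _ _ Hqp _.
by move: Hqp; rewrite [p]ord1 [q]ord1 eqxx.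
Qed.

Lemma hist1 (V : finType) (L : seq ('I_1 * V)) p : hist L p = [seq z.2 | z <- L].
Proof.
rewrite /hist; congr map; apply/all_filterP; apply/allP => z _.
by rewrite [z.1]ord1 [p]ord1.
Qed.

Lemma hist_last_precedes (V : finType) (P : nat) (L a b : seq ('I_P * V)) p u w cc :
  uniq [seq z.2 | z <- L] -> L = a ++ (p, u) :: b -> hist a p = rcons cc w ->
  index w [seq z.2 | z <- L] < index u [seq z.2 | z <- L].
Proof.
move=> Hu E Hh; have Hw : w \in [seq z.2 | z <- a].
  have : w \in hist a p by rewrite Hh mem_rcons mem_head.
  by rewrite /hist => /mapP [z Hz ->]; apply: map_f; move: Hz; rewrite mem_filter => /andP [].
move: Hu; rewrite E map_cat cat_uniq => /and3P [_ H _].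
have Hu' : u \notin [seq z.2 | z <- a] by apply: contra H => Hy; rewrite /= Hy.
rewrite !index_cat Hw (negbTE Hu').
by have := index_mem w [seq z.2 | z <- a]; rewrite Hw; lia.
Qed.

Lemma log_split_unique (I T : eqType) (L a b a' b' : seq (I * T)) p p' y :
  uniq [seq z.2 | z <- L] -> L = a ++ (p, y) :: b -> L = a' ++ (p', y) :: b' ->
  a = a' /\ p = p'.
Proof.
move=> Hu E1 E2.
have Hs a0 b0 p0 : L = a0 ++ (p0, y) :: b0 -> size a0 = index y [seq z.2 | z <- L].
  move=> E; move: Hu; rewrite E map_cat cat_uniq /= => /and3P [_ H _].
  rewrite index_cat; case: ifP => [Hin|_]; first by move: H; rewrite Hin.
  by rewrite /= eqxx addn0 size_map.
have Ea : size a = size a' by rewrite (Hs _ _ _ E1) (Hs _ _ _ E2).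
have E := E1; rewrite E2 in E.
have := congr1 (take (size a)) E; rewrite take_size_cat // Ea take_size_cat // => Eaa.
by subst a'; move: E => /eqP; rewrite eqseq_cat // => /andP [_ /eqP [->]].
Qed.

Lemma log_split_exists (I T : eqType) (L : seq (I * T)) y :
  y \in [seq z.2 | z <- L] -> exists a b p, L = a ++ (p, y) :: b.
Proof. by case/mapP=> [[p y'] Hin /= ->]; case/splitPr: Hin => a b; exists a, b, p. Qed.

(** * Without stalls and steals, the right child follows the future thread

   Consider a fork [v] with left child [l] and right child [u], and let
   [w] be the last node of the future thread, whose only touch is [x].
   Suppose that, in a complete run, [u] is never stolen and no touch of
   the future thread is stalled (its future parent is executed before its
   local parent). Then the processor [p0] executing [v] pushes [u] at the
   bottom of its deque, runs the future thread (possibly pushing and later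
   popping right children of forks in it) down to [w], gets stuck at [w]
   since [x] needs [u], and pops [u]: it executes [u] right after [w].
   The invariant [phase] below tracks this. *)

Definition unstalled (V : finType) (G : fpdag V) (ex : seq V) (l : V) :=
  forall y f g, connect (cont G) l y -> tch G f y -> cont G g y -> index f ex < index g ex.

Section RightChild.
Variables (V : finType) (G : fpdag V) (P : nat).
Hypothesis Hfp : future_parallel G.
Local Notation edge := (edge G).
Local Notation state := (state V P).

Variables (v l u x w : V).
Hypotheses (Hl : fut G v l) (Hu : cont G v u) (Hw : connect (cont G) l w)
  (Hws : ~~ has_cont_succ G w) (Hsingle : forall c, tch G w c -> c = x)
  (Hux : connect edge u x) (Hxu : x != u).

Variable sf : state.
Hypotheses (Hsf : inv G sf) (Hns : unstalled G (executed sf) l) (Hst : u \notin stolen sf).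

Definition in_thread n := connect (cont G) l n.

Definition untouched (s : state) b :=
  forall m, in_thread m -> connect (cont G) b m -> m \notin executed s.

Section Phase.
Variable p0 : 'I_P.

Inductive phase (s : state) : Prop :=
| PhRun n A of asg s p0 = Some n & in_thread n & dq s p0 = rcons A u & untouched s n
  (* the rest of the thread, from [b], waits in the deque below [u] *)
| PhBelow b A B of dq s p0 = A ++ u :: b :: B & in_thread b & untouched s b
| PhIdle A cc of asg s p0 = None & dq s p0 = rcons A u & hist (log s) p0 = rcons cc w
| PhPopped cc of asg s p0 = Some u & hist (log s) p0 = rcons cc w
| PhDone a b cc of log s = a ++ (p0, u) :: b & hist a p0 = rcons cc w.

(* Executing some node [z <> b] keeps the thread from [b] on untouched,
   since its first node [b] is not enabled. *)
Lemma untouched_exec_other (s : state) b q z : inv G s -> in_thread b -> untouched s b ->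
  asg s q = Some z -> z != b ->
  forall m, in_thread m -> connect (cont G) b m -> m \notin rcons (executed s) z.
Proof.
move=> Hs Hb Hun Hq Hzb m Hm Hbm; rewrite mem_rcons inE negb_or (Hun _ Hm Hbm) andbT.
apply/eqP => Emz; subst m; rewrite eq_sym in Hzb.
have [m' Hbm' Hm'z] := connect_last Hbm Hzb.
have Hm'ex := inv_pool_parents Hs (or_introl Hq) (cont_edge Hm'z).
by move: (Hun _ (connect_trans Hb Hbm') Hbm'); rewrite Hm'ex.
Qed.

Lemma untouched_exec_next (s : state) n c : untouched s n -> cont G n c ->
  forall m, in_thread m -> connect (cont G) c m -> m \notin rcons (executed s) n.
Proof.
move=> Hun Hnc m Hm Hcm; rewrite mem_rcons inE negb_or.
have Hnm : connect (cont G) n m by exact: connect_trans (connect1 Hnc) Hcm.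
rewrite (Hun _ Hm Hnm) andbT; apply/eqP => E; subst m.
exact: (fp_acyclic Hfp (cont_edge Hnc) (connect_cont_edge Hcm)).
Qed.

Lemma steal_above_u (s' : state) A rest w' d :
  (forall z, z \in stolen s' -> z \in stolen sf) -> w' \in stolen s' ->
  A ++ u :: rest = w' :: d -> exists A', A = w' :: A' /\ d = A' ++ u :: rest.
Proof.
move=> Hsub Hw'; case: A => [|a A] /= [E1 E2]; last by subst; exists A.
by subst; move: (Hsub _ Hw'); rewrite (negbTE Hst).
Qed.

(* A thread node's continuation child is ready once it is executed: the
   future parent of a touch precedes its local parent in the final order. *)
Lemma thread_child_ready (s : state) n c ext : in_thread n -> cont G n c ->
  executed sf = rcons (executed s) n ++ ext -> ready G (rcons (executed s) n) c.
Proof.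
move=> Hn Hc Hex; apply/forallP => e; apply/implyP => He.
case: (cont_child_parents Hfp Hc He) => [->|Ht]; first by rewrite mem_rcons mem_head.
have := Hns (connect_trans Hn (connect1 Hc)) Ht Hc.
by rewrite Hex -cats1 -catA /= => /index_lt_prefix Hin; rewrite mem_cat Hin.
Qed.

Lemma touch_blocked (s : state) c : inv G s -> asg s p0 = Some w -> u \in dq s p0 ->
  tch G w c -> ~~ ready G (rcons (executed s) w) c.
Proof.
move=> Hs Ha Hud Hc; rewrite (Hsingle Hc); apply/negP => Hr.
have Huex : u \notin executed s := dq_not_executed Hs Hud.
have Hux' : u != x by rewrite eq_sym.
have [q Huq Hqx] := connect_last Hux Hux'.
have : q \in rcons (executed s) w by move/forallP: Hr => /(_ q) /implyP; apply.
rewrite mem_rcons inE => /orP [/eqP Eq|Hq]; last first.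
  by move: Huex; rewrite (executed_closed_connect Hs Huq Hq).
subst q; have Huw : u != w by apply/eqP => E; subst; case: (asg_not_dq Hs Ha Hud).
have [q' Huq' Hq'w] := connect_last Huq Huw.
have Hq'ex := inv_pool_parents Hs (or_introl Ha) Hq'w.
by move: Huex; rewrite (executed_closed_connect Hs Huq' Hq'ex).
Qed.

Lemma phase_other (s s' : state) : inv G s -> phase s ->
  asg s' p0 = asg s p0 ->
  (dq s' p0 = dq s p0 \/ exists w' d, [/\ dq s p0 = w' :: d, dq s' p0 = d & w' \in stolen s']) ->
  (forall z, z \in stolen s' -> z \in stolen sf) ->
  (log s' = log s \/ exists q z, [/\ q != p0, asg s q = Some z & log s' = rcons (log s) (q, z)]) ->
  phase s'.
Proof.
move=> Hs Hph Ha Hd Hsub Hlog.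
have Hun b : in_thread b -> untouched s b ->
    (forall q z, q != p0 -> asg s q = Some z -> z != b) -> untouched s' b.
  move=> Hb Hunb Hneq; case: Hlog => [E|[q [z [Hq Hz E]]]] m Hm Hbm.
    by rewrite /executed E; apply: Hunb.
  rewrite /executed E map_rcons.
  exact: untouched_exec_other Hs Hb Hunb Hz (Hneq _ _ Hq Hz) _ Hm Hbm.
have Hhist : hist (log s') p0 = hist (log s) p0.
  by case: Hlog => [->|[q [z [Hq _ ->]]]] //; rewrite hist_rcons_neq // eq_sym.
have Hdq A rest : dq s p0 = A ++ u :: rest -> exists A', dq s' p0 = A' ++ u :: rest.
  move=> E; case: Hd => [->|[w' [d [E1 E2 E3]]]]; first by exists A.
  have [A' [_ Ed]] := steal_above_u Hsub E3 (etrans (esym E) E1).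
  by exists A'; rewrite E2 Ed.
case: Hph => [n A Ha0 Hn HdA Hunn|b A B HdA Hb Hunb|A cc Ha0 HdA Hh|cc Ha0 Hh|a b cc E Hh].
- have [A' HA'] := Hdq A [::] ltac:(by rewrite HdA cats1).
  apply: (PhRun (n := n) (A := A')) => //; [by rewrite Ha | by rewrite HA' cats1 |].
  apply: Hun => // q z Hq Hz; apply/eqP => E; subst z.
  by move/eqP: Hq; apply; exact: (asg_unique Hs Hz Ha0).
- have [A' HA'] := Hdq A (b :: B) HdA.
  apply: (PhBelow (b := b) (A := A') (B := B)) => //.
  apply: Hun => // q z Hq Hz; apply/eqP => E; subst z.
  by apply: (asg_not_dq Hs Hz (q := p0)); rewrite HdA mem_cat !inE eqxx !orbT.
- have [A' HA'] := Hdq A [::] ltac:(by rewrite HdA cats1).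
  by apply: (PhIdle (A := A') (cc := cc)); rewrite ?Ha ?Hhist // HA' cats1.
- by apply: (PhPopped (cc := cc)); rewrite ?Ha ?Hhist.
- case: Hlog => [E'|[q [z [_ _ E']]]].
    by apply: (PhDone (a := a) (b := b) (cc := cc)); rewrite ?E' ?E.
  by apply: (PhDone (a := a) (b := rcons b (q, z)) (cc := cc)); rewrite // E' E rcons_cat.
Qed.


Lemma phase_exec_late (s s' : state) z : asg s p0 = Some z ->
  log s' = rcons (log s) (p0, z) ->
  (exists cc, asg s p0 = Some u /\ hist (log s) p0 = rcons cc w) \/
  (exists a b cc, log s = a ++ (p0, u) :: b /\ hist a p0 = rcons cc w) -> phase s'.
Proof.
move=> Ha E [[cc [Hu0 Hh]]|[a [b [cc [E1 Hh]]]]].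
  move: Hu0; rewrite Ha => -[Ezu]; rewrite Ezu in E.
  by apply: (PhDone (b := [::]) _ Hh); rewrite E cats1.
by apply: (PhDone (b := rcons b (p0, z)) _ Hh); rewrite E E1 rcons_cat.
Qed.

Lemma phase_exec_below (s s' : state) z b A B B' : inv G s -> asg s p0 = Some z ->
  dq s p0 = A ++ u :: b :: B -> in_thread b -> untouched s b ->
  executed s' = rcons (executed s) z -> dq s' p0 = A ++ u :: b :: B' -> phase s'.
Proof.
move=> Hs Ha HdA Hb Hun Hex Hd'.
have Hzb : z != b.
  apply/eqP => E; subst z; apply: (asg_not_dq Hs Ha (q := p0)).
  by rewrite HdA mem_cat !inE eqxx !orbT.
apply: (PhBelow Hd' Hb) => m Hm Hbm; rewrite Hex.
exact: (untouched_exec_other Hs Hb Hun Ha Hzb Hm Hbm).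
Qed.

Lemma phase_fork_self (s : state) z l' r : inv G s -> asg s p0 = Some z -> cont G z r ->
  phase s ->
  phase (St (upd (asg s) p0 (Some l')) (upd (dq s) p0 (rcons (dq s p0) r))
            (rcons (log s) (p0, z)) (stolen s)).
Proof.
move=> Hs Ha Hc; case=> [n A Ha0 Hn HdA Hun|b A B HdA Hb Hun|A cc Ha0 _ _|cc Ha0 Hh|a b cc E Hh].
- move: Ha; rewrite Ha0 => -[Ezn]; subst z.
  apply: (PhBelow (A := A) (B := [::])).
  + by rewrite /= upd_eq HdA -!cats1 -catA.
  + exact: connect_trans Hn (connect1 Hc).
  + by move=> m Hm Hrm; rewrite executed_rcons; exact: (untouched_exec_next Hun Hc Hm Hrm).
- apply: (phase_exec_below Hs Ha HdA Hb Hun (executed_rcons _ _ _ _ _ _)).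
  by rewrite /= upd_eq HdA rcons_cat.
- by move: Ha; rewrite Ha0.
- by apply: (phase_exec_late Ha) => //; left; exists cc.
- by apply: (phase_exec_late Ha) => //; right; exists a, b, cc.
Qed.

Lemma phase_next_self (s : state) z c : inv G s -> asg s p0 = Some z -> ~~ is_fork G z ->
  edge z c -> ready G (rcons (executed s) z) c -> phase s ->
  phase (St (upd (asg s) p0 (Some c)) (dq s) (rcons (log s) (p0, z)) (stolen s)).
Proof.
move=> Hs Ha Hnf He Hrc; case=> [n A Ha0 Hn HdA Hun|b A B HdA Hb Hun|A cc Ha0 _ _|cc Ha0 Hh|a b cc E Hh].
- move: Ha; rewrite Ha0 => -[Ezn]; subst z.
  case: (boolP (has_cont_succ G n)) => [/existsP [c0 Hc0]|Hlast].
    have Ecc := nonfork_child Hfp Hnf Hc0 He; subst c0.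
    apply: (PhRun (A := A)) => //=; first by rewrite upd_eq.
      exact: connect_trans Hn (connect1 Hc0).
    by move=> m Hm Hcm; rewrite executed_rcons; exact: (untouched_exec_next Hun Hc0 Hm Hcm).
  (* at the last node [w], the only child is the touch [x], which waits for [u] *)
  have Enw := thread_last_unique Hfp Hn Hw Hlast Hws; subst n.
  have Hud : u \in dq s p0 by rewrite HdA mem_rcons mem_head.
  by move: (touch_blocked Hs Ha0 Hud (last_node_child Hnf Hws He)); rewrite Hrc.
- exact: (phase_exec_below Hs Ha HdA Hb Hun (executed_rcons _ _ _ _ _ _) HdA).
- by move: Ha; rewrite Ha0.
- by apply: (phase_exec_late Ha) => //; left; exists cc.
- by apply: (phase_exec_late Ha) => //; right; exists a, b, cc.
Qed.

Lemma phase_stop_self (s : state) z ext : inv G s -> asg s p0 = Some z ->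
  (forall c, edge z c -> ~~ ready G (rcons (executed s) z) c) ->
  executed sf = rcons (executed s) z ++ ext -> phase s ->
  phase (St (upd (asg s) p0 None) (dq s) (rcons (log s) (p0, z)) (stolen s)).
Proof.
move=> Hs Ha Hno Hex; case=> [n A Ha0 Hn HdA Hun|b A B HdA Hb Hun|A cc Ha0 _ _|cc Ha0 Hh|a b cc E Hh].
- move: Ha; rewrite Ha0 => -[Ezn]; subst z.
  case: (boolP (has_cont_succ G n)) => [/existsP [c0 Hc0]|Hlast].
    (* inside the thread, the next node is always ready *)
    by move: (Hno _ (cont_edge Hc0)); rewrite (thread_child_ready Hn Hc0 Hex).
  have Enw := thread_last_unique Hfp Hn Hw Hlast Hws; subst n.
  by apply: (PhIdle (A := A) (cc := hist (log s) p0)); rewrite /= ?upd_eq // hist_rcons_eq.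
- exact: (phase_exec_below Hs Ha HdA Hb Hun (executed_rcons _ _ _ _ _ _) HdA).
- by move: Ha; rewrite Ha0.
- by apply: (phase_exec_late Ha) => //; left; exists cc.
- by apply: (phase_exec_late Ha) => //; right; exists a, b, cc.
Qed.

Lemma phase_pop_self (s : state) d w' : asg s p0 = None -> dq s p0 = rcons d w' -> phase s ->
  phase (St (upd (asg s) p0 (Some w')) (upd (dq s) p0 d) (log s) (stolen s)).
Proof.
move=> Ha Hd; case=> [n A Ha0 _ _ _|b A B HdA Hb Hun|A cc _ HdA Hh|cc Ha0 _|a b cc E Hh].
- by move: Ha; rewrite Ha0.
-
  case/lastP: B HdA => [|B y] HdA.
    move: Hd; rewrite HdA -cat_rcons cats1 => /rcons_inj [Ed Ew]; subst d w'.
    by apply: (PhRun (A := A)); rewrite /= ?upd_eq.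
  move: Hd; rewrite HdA -rcons_cons -rcons_cons -rcons_cat => /rcons_inj [Ed Ew]; subst d w'.
  by apply: (PhBelow (A := A) (B := B)); rewrite /= ?upd_eq.
- move: Hd; rewrite HdA => /rcons_inj [Ed Ew]; subst d w'.
  by apply: (PhPopped (cc := cc)); rewrite /= ?upd_eq.
- by move: Ha; rewrite Ha0.
- by apply: (PhDone (a := a) (b := b) (cc := cc)).
Qed.

Lemma phase_steal_self (s : state) q w' d : asg s p0 = None -> dq s p0 = [::] -> phase s ->
  phase (St (upd (asg s) p0 (Some w')) (upd (dq s) q d) (log s) (rcons (stolen s) w')).
Proof.
move=> Ha Hd; case=> [n A Ha0 _ _ _|b A B HdA _ _|A cc _ HdA _|cc Ha0 _|a b cc E Hh].
- by move: Ha; rewrite Ha0.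
- by move: Hd; rewrite HdA; case: {HdA}A.
- by move: Hd; rewrite HdA; case: {HdA}A.
- by move: Ha; rewrite Ha0.
- by apply: (PhDone (a := a) (b := b) (cc := cc)).
Qed.

Lemma phase_step (s s' : state) : inv G s -> step G s s' -> steps G s' sf -> phase s -> phase s'.
Proof.
move=> Hs Hstep Hrest; have [ext Hext] := steps_log Hrest; have Hstol := steps_stolen Hrest.
case: Hstep Hs Hext Hstol => [s0 p z l' r Ha Hr _ Hc | s0 p z c Ha Hr Hnf He Hrc
  | s0 p z Ha Hr Hnf Hno | s0 p d w' Ha Hd | s0 p q w' d Ha Hd Hqp Hdq] Hs Hext Hstol Hph.
- have [Ep|Hp] := eqVneq p p0; first by subst p; exact: phase_fork_self.
  apply: (phase_other Hs Hph) => //=; [by rewrite upd_neq // eq_sym | by left; rewrite upd_neq // eq_sym |].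
  by right; exists p, z; split=> //; rewrite eq_sym.
- have [Ep|Hp] := eqVneq p p0; first by subst p; exact: phase_next_self.
  apply: (phase_other Hs Hph) => //=; [by rewrite upd_neq // eq_sym | by left |].
  by right; exists p, z; split=> //; rewrite eq_sym.
- have [Ep|Hp] := eqVneq p p0.
    subst p; apply: (phase_stop_self Hs Ha Hno _ Hph).
    by rewrite /executed Hext /= map_cat map_rcons.
  apply: (phase_other Hs Hph) => //=; [by rewrite upd_neq // eq_sym | by left |].
  by right; exists p, z; split=> //; rewrite eq_sym.
- have [Ep|Hp] := eqVneq p p0; first by subst p; exact: phase_pop_self.
  apply: (phase_other Hs Hph) => //=; [by rewrite upd_neq // eq_sym | by left; rewrite upd_neq // eq_sym | by left].
- have [Ep|Hp] := eqVneq p p0; first by subst p; exact: phase_steal_self.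
  apply: (phase_other Hs Hph) => //=; [by rewrite upd_neq // eq_sym | | by left].
  have [Eq|Hq] := eqVneq q p0; last by left; rewrite upd_neq // eq_sym.
  subst q; right; exists w', d; split=> //; first by rewrite upd_eq.
  by rewrite mem_rcons mem_head.
Qed.

Lemma phase_steps (s s' : state) : steps G s s' -> steps G s' sf -> inv G s ->
  phase s -> phase s'.
Proof.
elim=> // s1 s2 s3 H12 H23 IH Hf Hs1 Hph; apply: IH (inv_step Hfp Hs1 H12) _ => //.
exact: phase_step Hs1 H12 (steps_trans H23 Hf) Hph.
Qed.

End Phase.

(* At the end of the run [u] has been executed, so [p0] is in [PhDone]. *)
Lemma phase_final p0 : u \in executed sf -> phase p0 sf ->
  exists a b cc, log sf = a ++ (p0, u) :: b /\ hist a p0 = rcons cc w.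
Proof.
move=> Hun; have Hdq B : dq sf p0 = B -> u \in B -> False.
  by move=> <- /(dq_not_executed Hsf); rewrite Hun.
case=> [n A _ _ HdA _|b A B HdA _ _|A cc _ HdA _|cc Ha0 _|a b cc E Hh].
- by case: (Hdq _ HdA); rewrite mem_rcons mem_head.
- by case: (Hdq _ HdA); rewrite mem_cat mem_head orbT.
- by case: (Hdq _ HdA); rewrite mem_rcons mem_head.
- by move: (asg_not_executed Hsf Ha0); rewrite Hun.
- by exists a, b, cc.
Qed.

Lemma phase_at_fork (s : state) p : inv G s -> asg s p = Some v ->
  phase p (St (upd (asg s) p (Some l)) (upd (dq s) p (rcons (dq s p) u))
              (rcons (log s) (p, v)) (stolen s)).
Proof.
move=> Hs Ha; apply: (PhRun (n := l) (A := dq s p)); rewrite /= ?upd_eq //; first exact: connect0.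
move=> m Hm Hlm; rewrite executed_rcons mem_rcons inE negb_or; apply/andP; split.
  by apply/eqP => E; subst m; case: (fp_acyclic Hfp (fut_edge Hl) (connect_cont_edge Hlm)).
apply: contra (asg_not_executed Hs Ha) => Hmex.
have Hvm : connect edge v m := connect_trans (connect1 (fut_edge Hl)) (connect_cont_edge Hlm).
exact: (executed_closed_connect Hs Hvm Hmex).
Qed.

Lemma step_executing_fork (s s' : state) : step G s s' ->
  v \notin executed s -> v \in executed s' ->
  exists2 p, asg s p = Some v & s' = St (upd (asg s) p (Some l))
    (upd (dq s) p (rcons (dq s p) u)) (rcons (log s) (p, v)) (stolen s).
Proof.
have Hfv : is_fork G v by apply/is_forkP; exists l.
case=> {s s'}[s p z l' r Ha _ Hl' Hc|s p z c Ha _ Hnf _ _|s p z Ha _ Hnf _|s p d w' _ _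
  |s p q w' d _ _ _ _] Hv; rewrite ?executed_rcons ?mem_rcons ?inE ?(negbTE Hv) ?orbF //.
- move=> /eqP Ez; subst z; exists p => //.
  by rewrite (fork_left_unique Hfp Hl Hl') (cont_func Hfp Hu Hc).
- by move=> /eqP Ez; subst z; rewrite Hfv in Hnf.
- by move=> /eqP Ez; subst z; rewrite Hfv in Hnf.
Qed.

Lemma right_child_follows_last : (exists p, steps G (init G p) sf) ->
  (forall z, z \in executed sf) ->
  exists p0 a b cc, log sf = a ++ (p0, u) :: b /\ hist a p0 = rcons cc w.
Proof.
move=> [pi Hrun] Hall.
have [sa [sb [H1 H2 H3 H4 H5]]] := exec_step_of Hrun (Hall v) (negbT (in_nil v)).
have Hsa : inv G sa := inv_steps Hfp (inv_init Hfp pi) H1.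
have Hsb : inv G sb := inv_step Hfp Hsa H2.
have [p Ha Esb] := step_executing_fork H2 H4 H5.
have Hph : phase p sb by rewrite Esb; exact: phase_at_fork Hsa Ha.
have [a [b [cc Hab]]] := phase_final (Hall u) (phase_steps H3 (steps_refl _ _) Hsb Hph).
by exists p, a, b, cc.
Qed.

End RightChild.

Section Executions.
Variables (V : finType) (G : fpdag V) (P : nat).
Hypothesis Hfp : future_parallel G.
Local Notation state := (state V P).

Lemma touch_after_local_parent (s : state) y f g a b p : inv G s ->
  tch G f y -> cont G g y -> log s = a ++ (p, y) :: b ->
  (exists cc, hist a p = rcons cc g) <-> index f (executed s) < index g (executed s).
Proof.
move=> Hs Hf Hg E.
have Hex : executed s = [seq z.2 | z <- a] ++ y :: [seq z.2 | z <- b].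
  by rewrite /executed E map_cat.
have Hfg : f != g by apply/eqP => Efg; subst; case: (cont_tch Hfp Hg Hf).
case: (inv_log_prov Hs E) => [Er|[f' [Hf' /is_forkP [l' Hl']]]|[cc [e [Hh He Hall]]]].
- by subst y; case: (root_no_parent Hfp (cont_edge Hg)).
- by case/negP: (right_not_touch Hfp Hl' Hf'); apply/(is_touchP Hfp); exists f, g.
- have [Hfin Hfe] := Hall _ (tch_edge Hf); have [Hgin Hge] := Hall _ (cont_edge Hg).
  have Hne : index f [seq z.2 | z <- a] != index g [seq z.2 | z <- a].
    by apply: contra Hfg => /eqP /(index_inj f Hfin Hgin) ->.
  rewrite Hex !index_cat Hfin Hgin; case: (touch_parents Hfp Hf Hg He) => Ee; subst e.
  + split=> [[cc' Hh']|]; last by move: Hge; lia.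
    by move: Hfg; rewrite Hh in Hh'; case/rcons_inj: Hh' => _ ->; rewrite eqxx.
  + by split=> _; [move: Hfe Hne; lia | exists cc].
Qed.

Lemma imm_before_unique (o : seq V) e v1 y : uniq o -> imm_before o e y ->
  imm_before o v1 y -> v1 = e.
Proof. by move=> Hu [A [B E1]] [A' [B' E2]]; exact: imm_pred_unique Hu E2 E1. Qed.

Lemma not_deviationP (o : seq V) (s : state) y e a b p : uniq o -> imm_before o e y ->
  uniq (executed s) -> log s = a ++ (p, y) :: b ->
  ~ deviation o s y <-> exists cc, hist a p = rcons cc e.
Proof.
move=> Ho Hey Hs E; split=> [Hnd|[cc Hh] [v1 [Hv1 [a' [b' [p' [E' Hall]]]]]]].
  have [//|Hno] : (exists cc, hist a p = rcons cc e) \/ forall c, hist a p <> rcons c e.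
    case/lastP: (hist a p) => [|cc e']; first by right; case.
    have [->|Hne] := eqVneq e' e; first by left; exists cc.
    by right=> c /rcons_inj [_ Ee]; move: Hne; rewrite Ee eqxx.
  by case: Hnd; exists e; split=> //; exists a, b, p.
have Ev1 := imm_before_unique Ho Hey Hv1; subst v1.
have [Ea Ep] := log_split_unique Hs E' E; subst a' p'.
exact: Hall cc Hh.
Qed.

Lemma reach_local_parent (s : state) f g y u2 : inv G s -> (forall z, z \in executed s) ->
  tch G f y -> cont G g y -> connect (edge G) u2 y -> y != u2 ->
  index f (executed s) < index u2 (executed s) -> connect (edge G) u2 g.
Proof.
move=> Hs Hall Hf Hg Huy Hyu Hfu; rewrite eq_sym in Hyu.
have [q Huq Hqy] := connect_last Huy Hyu.
case: (touch_parents Hfp Hf Hg Hqy) => Eq; subst q => //.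
by have := leq_ltn_trans (executed_order Hs Huq (Hall f)) Hfu; rewrite ltnn.
Qed.

End Executions.

Lemma sequential_imm_before (V : finType) (s1 : state V 1) a b p y cc e :
  log s1 = a ++ (p, y) :: b -> hist a p = rcons cc e -> imm_before (executed s1) e y.
Proof.
rewrite hist1 => E Hh; exists cc, [seq z.2 | z <- b].
by rewrite /executed E map_cat Hh /= cat_rcons.
Qed.

(** * Structured single-touch computations *)

Section Structured.
Variables (V : finType) (G : fpdag V).
Hypotheses (Hfp : future_parallel G) (Hss : structured_single_touch G).
Local Notation edge := (edge G).

Lemma structured_fork_facts v2 st u2 f y :
  fut G v2 st -> cont G v2 u2 -> connect (cont G) st f -> tch G f y ->
  [/\ ~~ has_cont_succ G f, (forall c, tch G f c -> c = y), connect edge u2 y & y != u2].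
Proof.
move=> Hv2 Hu2 Hsf Hfy; case/and3P: (tch_props Hfp Hfy) => Hfs _ /existsP [g Hg].
have Hto c g' : tch G f c -> cont G g' c -> touch_of G st c.
  move=> Hc Hg'; apply/existsP; exists f; apply/existsP; exists g'.
  by case/and3P: (tch_props Hfp Hc) => _ -> _; rewrite /same_thread Hsf Hc Hg'.
have [_ [x' /andP [Hx' Hdx']] Huniq] := Hss Hv2 Hu2.
have Exy : x' = y := Huniq _ _ Hx' (Hto _ _ Hfy Hg); subst x'.
split=> //.
- move=> c Hc; case/and3P: (tch_props Hfp Hc) => _ _ /existsP [g' Hg'].
  exact: Huniq _ _ (Hto _ _ Hc Hg') (Hto _ _ Hfy Hg).
- apply/eqP => E; subst y; have Ef := right_parent Hfp Hv2 Hu2 (tch_edge Hfy); subst f.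
  by case: (cont_tch Hfp Hu2 Hfy).
Qed.

(* By strong induction on
   the position of the touch [y]: the touches of the thread of its future
   parent [f] come earlier, so by induction they are not stalled, and the
   right child [u2] of that thread's fork runs right after [f]; as [u2]
   reaches the local parent [g] of [y], [f] precedes [g]. *)
Lemma sequential_unstalled (s1 : state V 1) : complete_run G s1 ->
  forall y f g, tch G f y -> cont G g y -> index f (executed s1) < index g (executed s1).
Proof.
move=> Hc1; have [Hs1 Hrun1 Hall1] := complete_inv Hfp Hc1.
have Hnosteal : stolen s1 = [::] by case: Hrun1 => p Hp; exact: (sequential_no_steal Hp).
suff H n y : index y (executed s1) < n -> forall f g, tch G f y -> cont G g y ->
    index f (executed s1) < index g (executed s1).
  by move=> y; exact: H (index y (executed s1)).+1 y (ltnSn _).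
elim: n y => [//|n IH] y Hyn f g Hf Hg.
have [st [v2 [u2 [Hstf Hv2 Hu2]]]] := touch_source_fork Hfp Hf.
have [Hfs Hsing Huy Hyu] := structured_fork_facts Hv2 Hu2 Hstf Hf.
have Hfy := inv_topological Hs1 (tch_edge Hf) (Hall1 y).
have Hun : unstalled G (executed s1) st.
  move=> y' f' g' Hy' Hf' Hg'; apply: (IH y') Hf' Hg'.
  have Hy'f := connect_cont_edge (thread_reaches_last Hfp Hy' Hstf Hfs).
  exact: leq_ltn_trans (executed_order Hs1 Hy'f (Hall1 f)) (leq_trans Hfy (ltnSE Hyn)).
have Hst2 : u2 \notin stolen s1 by rewrite Hnosteal.
have [p0 [a [b [cc [E Hh]]]]] := right_child_follows_last Hfp Hv2 Hu2 Hstf Hfs Hsing Huy Hyu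
  Hs1 Hun Hst2 Hrun1 Hall1.
have Hfu := hist_last_precedes (executed_uniq Hs1) E Hh.
have Hug := reach_local_parent Hfp Hs1 Hall1 Hf Hg Huy Hyu Hfu.
exact: leq_trans Hfu (executed_order Hs1 Hug (Hall1 g)).
Qed.

Lemma sequential_touch_pred (s1 : state V 1) y f g : complete_run G s1 ->
  tch G f y -> cont G g y -> imm_before (executed s1) g y.
Proof.
move=> Hc1 Hf Hg; have [Hs1 _ Hall1] := complete_inv Hfp Hc1.
have [a [b [p E]]] := log_split_exists (Hall1 y).
have [cc Hh] := (touch_after_local_parent Hfp Hs1 Hf Hg E).2 (sequential_unstalled Hc1 Hf Hg).
exact: sequential_imm_before E Hh.
Qed.

Section Fork.
Variables (P : nat) (s1 : state V 1) (s : state V P) (v l u : V).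
Hypotheses (Hc1 : complete_run G s1) (Hc : complete_run G s)
  (Hl : fut G v l) (Hu : cont G v u).

Local Notation deviation y := (deviation (executed s1) s y).

Lemma unstalled_of_no_deviation :
  (forall y, same_thread G l y -> is_touch G y -> ~ deviation y) ->
  unstalled G (executed s) l.
Proof.
move=> Hnd y f g Hy Hf Hg; have [Hs1 _ _] := complete_inv Hfp Hc1.
have [Hs _ Hall] := complete_inv Hfp Hc.
have [a [b [p E]]] := log_split_exists (Hall y).
apply/(touch_after_local_parent Hfp Hs Hf Hg E).
apply/(not_deviationP (executed_uniq Hs1) (sequential_touch_pred Hc1 Hf Hg) (executed_uniq Hs) E).
by apply: Hnd; [rewrite /same_thread Hy | apply/(is_touchP Hfp); exists f, g].
Qed.

(* Without steal of [u] and stalled touches in the future thread, neither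
   its touch [x] nor the right child [u] is a deviation: in both
   executions [u] follows the last node [w] of the thread on the same
   processor, and [x] follows its local parent. *)
Lemma fork_no_deviation x : touch_of G l x -> u \notin stolen s ->
  unstalled G (executed s) l -> ~ deviation x /\ ~ deviation u.
Proof.
move=> Htx Hus Hun; have [Hs1 Hrun1 Hall1] := complete_inv Hfp Hc1.
have [Hs Hrun Hall] := complete_inv Hfp Hc.
case/existsP: Htx => w /existsP [g /and4P [Hlw Hwx _ Hgx]].
have Hlw' := same_thread_start (left_no_cont_pred Hfp Hl) Hlw.
have [Hws Hsingle Hux Hxu] := structured_fork_facts Hl Hu Hlw' Hwx.
have Hus1 : u \notin stolen s1.
  by case: Hrun1 => p Hp; rewrite (sequential_no_steal Hp).
have Hun1 : unstalled G (executed s1) l by move=> y' f' g' _; exact: (sequential_unstalled Hc1).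
have [p1 [a1 [b1 [cc1 [E1 Hh1]]]]] := right_child_follows_last Hfp Hl Hu Hlw' Hws Hsingle
  Hux Hxu Hs1 Hun1 Hus1 Hrun1 Hall1.
have Hwu1 := sequential_imm_before E1 Hh1.
have [p5 [a5 [b5 [cc5 [E5 Hh5]]]]] := right_child_follows_last Hfp Hl Hu Hlw' Hws Hsingle
  Hux Hxu Hs Hun Hus Hrun Hall.
split; last first.
  by apply/(not_deviationP (executed_uniq Hs1) Hwu1 (executed_uniq Hs) E5); exists cc5.
(* [x] follows its local parent [g], which runs after [u], hence after [w] *)
have Hwu := hist_last_precedes (executed_uniq Hs) E5 Hh5.
have Hug := reach_local_parent Hfp Hs Hall Hwx Hgx Hux Hxu Hwu.
have Hwg := leq_trans Hwu (executed_order Hs Hug (Hall g)).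
have [a [b [p E]]] := log_split_exists (Hall x).
apply/(not_deviationP (executed_uniq Hs1) (sequential_touch_pred Hc1 Hwx Hgx) (executed_uniq Hs) E).
exact/(touch_after_local_parent Hfp Hs Hwx Hgx E).
Qed.

End Fork.
End Structured.

Theorem mainTheorem2 (V : finType) (G : fpdag V) (P : nat)
    (s1 : state V 1) (s : state V P) (v l u x : V) :
  future_parallel G -> structured_single_touch G -> 0 < P ->
  complete_run G s1 -> complete_run G s ->
  fut G v l -> cont G v u -> touch_of G l x ->
  deviation (executed s1) s x \/ deviation (executed s1) s u ->
  u \in stolen s \/
  exists y, [&& same_thread G l y & is_touch G y] /\ deviation (executed s1) s y.
Proof.
move=> Hfp Hss _ Hc1 Hc Hl Hu Htx Hdev.
have [Hus|Hus] := boolP (u \in stolen s); [by left | right].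
case: (classic (exists y, [&& same_thread G l y & is_touch G y] /\
  deviation (executed s1) s y)) => // Hno.
have Hun : unstalled G (executed s) l.
  apply: (unstalled_of_no_deviation Hfp Hss Hc1 Hc) => y Hy Hty Hd.
  by apply: Hno; exists y; rewrite Hy Hty.
have [Hx Hu'] := fork_no_deviation Hfp Hss Hc1 Hc Hl Hu Htx Hus Hun.
by case: Hdev.
Qed.
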